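(* Let $k$ and $\ell$ be positive integers with $k\ge 3$. Then there exists a positive integer $N_2$ such that $px_{k,\ell}(K_{n,n})=2$ for every integer $n\ge N_2$.
   Context: All graphs are finite, simple and undirected; $K_{n,n}$ is the complete bipartite graph with both parts of size $n$. An edge-coloring of a graph may assign the same color to adjacent edges. A tree $T$ in an edge-colored graph is a proper tree if no two adjacent edges of $T$ receive the same color. For $S\subseteq V(G)$ with $|S|\ge 2$, an $S$-tree is a tree in $G$ containing all vertices of $S$. $S$-trees $T_1,\dots,T_\ell$ are internally disjoint if $E(T_i)\cap E(T_j)=\emptyset$ and $V(T_i)\cap V(T_j)=S$ for all $i\ne j$. For a connected graph $G$ of order $n$ and integers $k,\ell$ with $2\le k\le n$ and $1\le \ell\le \kappa_k(G)$ (where $\kappa_k(G)$ is the minimum, over all $k$-subsets $S$ of $V(G)$, of the maximum number of internally disjoint $S$-trees), the $(k,\ell)$-proper index $px_{k,\ell}(G)$ is the minimum number of colors in an edge-coloring of $G$ such that for every $k$-subset $S$ of $V(G)$ there exist $\ell$ internally disjoint proper $S$-trees. *)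

From mathcomp Require Import all_boot.
Set Implicit Arguments. Unset Strict Implicit. Unset Printing Implicit Defensive.

(* Edges are represented as 2-element
   vertex sets [set x; y]; an edge-coloring with c colors is any function
   {set T} -> 'I_c (its values on non-edges are irrelevant). *)

Section Graphs.
Variables (T : finType) (adj : rel T).

Definition simple_graph := symmetric adj /\ irreflexive adj.

Definition gedges : {set {set T}} :=
  [set e : {set T} | [exists x, exists y, adj x y && (e == [set x; y])]].

Definition connected_graph : Prop := forall x y : T, connect adj x y.

Definition subgraph (V : {set T}) (E : {set {set T}}) : Prop :=
  E \subset gedges /\ forall e, e \in E -> e \subset V.

Definition eadj (E : {set {set T}}) : rel T := fun x y => [set x; y] \in E.

Definition sub_connected (V : {set T}) (E : {set {set T}}) : Prop :=
  forall x y, x \in V -> y \in V -> connect (eadj E) x y.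

Definition sub_acyclic (E : {set {set T}}) : Prop :=
  forall p : seq T, uniq p -> 3 <= size p -> ~~ cycle (eadj E) p.

Definition is_tree (V : {set T}) (E : {set {set T}}) : Prop :=
  subgraph V E /\ V != set0 /\ sub_connected V E /\ sub_acyclic E.

Definition proper_sub (c : nat) (col : {set T} -> 'I_c) (E : {set {set T}}) : Prop :=
  forall e1 e2, e1 \in E -> e2 \in E -> e1 != e2 -> e1 :&: e2 != set0 ->
    col e1 != col e2.

Definition S_tree (S V : {set T}) (E : {set {set T}}) : Prop :=
  is_tree V E /\ S \subset V.

Definition int_disjoint (S : {set T}) (l : nat)
  (F : 'I_l -> {set T} * {set {set T}}) : Prop :=
  (forall i, S_tree S (F i).1 (F i).2) /\
  (forall i j, i != j -> (F i).2 :&: (F j).2 = set0 /\ (F i).1 :&: (F j).1 = S).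

Definition kappa_ge (k l : nat) : Prop :=
  forall S : {set T}, #|S| = k -> exists F : 'I_l -> {set T} * {set {set T}},
    int_disjoint S F.

Definition px_good (k l c : nat) : Prop :=
  exists col : {set T} -> 'I_c,
    forall S : {set T}, #|S| = k ->
      exists F : 'I_l -> {set T} * {set {set T}},
        int_disjoint S F /\ forall i, proper_sub col (F i).2.

(* px_{k,l}(G) = p : the parameter is defined (G connected, 2 <= k <= |V|,
   1 <= l <= kappa_k(G)) and p is the minimum number of colors of a good coloring *)
Definition px_is (k l p : nat) : Prop :=
  [/\ connected_graph, 2 <= k <= #|T|, 1 <= l, kappa_ge k l &
      px_good k l p /\ forall q, px_good k l q -> p <= q].

End Graphs.

Definition Knn_adj (n : nat) : rel ('I_n + 'I_n)%type :=
  fun x y => match x, y with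
             | inl _, inr _ | inr _, inl _ => true
             | _, _ => false
             end.
Arguments Knn_adj n : clear implicits.

From Pilot Require Import Defs.
From mathcomp Require Import all_boot zify.
Set Implicit Arguments. Unset Strict Implicit. Unset Printing Implicit Defensive.

(* Colour the edge {u, v} of K_{n,n} by the parity of the sum of the indices
   of u and v.  A path whose t-th vertex lies on side [odd t] and has an index
   of parity [odd t./2] is then properly coloured: consecutive edges share a
   vertex, and their other endpoints have indices of different parities.
   Given a k-set S, each of the l trees is such a path of length 8k: the
   vertex of S of rank a sits at position 8a + slot, where slot < 4 encodes
   its side and parity, and every other position carries a vertex outside S,
   distinct for distinct trees and positions (there are enough of them once
   n is large).  No two vertices of S are consecutive on a path, so every
   edge has an endpoint outside S and the paths are internally disjoint.
   One colour does not suffice: a proper tree with one colour is a matching,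
   so it cannot connect three vertices. *)

Lemma eq_set2 (T : finType) (a b c d : T) : [set a; b] = [set c; d] ->
  (a = c /\ b = d) \/ (a = d /\ b = c).
Proof.
move=> E.
have ha : a \in [set c; d] by rewrite -E set21.
have hb : b \in [set c; d] by rewrite -E set22.
have hc : c \in [set a; b] by rewrite E set21.
have hd : d \in [set a; b] by rewrite E set22.
by move: ha hb hc hd => /set2P[]-> /set2P[]-> /set2P[] h1 /set2P[] h2; subst; auto.
Qed.

Section PathTrees.
Variables (T : finType) (f : nat -> T) (L : nat).

Definition path_vset : {set T} := [set f (val t) | t : 'I_L].
Definition path_eset : {set {set T}} := [set [set f (val t); f (val t).+1] | t : 'I_L.-1].

Lemma path_vsetP v : reflect (exists2 t, t < L & v = f t) (v \in path_vset).
Proof.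
apply: (iffP imsetP) => [[t _ ->]|[t ht ->]]; first by exists (val t) => //; apply: ltn_ord.
by exists (Ordinal ht).
Qed.

Lemma path_esetP e :
  reflect (exists2 t, t.+1 < L & e = [set f t; f t.+1]) (e \in path_eset).
Proof.
apply: (iffP imsetP) => [[t _ ->]|[t ht ->]].
  by exists (val t) => //; case: t => /= t; lia.
have ht' : t < L.-1 by lia.
by exists (Ordinal ht').
Qed.

Lemma path_eset_sub e : e \in path_eset -> e \subset path_vset.
Proof.
move=> /path_esetP[t ht ->]; apply/subsetP => v /set2P[]->; apply/path_vsetP.
  by exists t => //; lia.
by exists t.+1.
Qed.

Lemma path_eadjP x y : reflect
  (exists2 t, t.+1 < L & (x = f t /\ y = f t.+1) \/ (x = f t.+1 /\ y = f t))
  (eadj path_eset x y).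
Proof.
apply: (iffP (path_esetP _)) => [[t ht /eq_set2 xy]|[t ht [[-> ->]|[-> ->]]]].
- by exists t.
- by exists t.
- by exists t; rewrite // setUC.
Qed.

Lemma eadj_path_sym : symmetric (eadj path_eset).
Proof. by move=> x y; rewrite /eadj setUC. Qed.

Lemma path_connected : 0 < L -> sub_connected path_vset path_eset.
Proof.
move=> L_gt0.
have from0 t : t < L -> connect (eadj path_eset) (f 0) (f t).
  elim: t => [|t IH] ht; first exact: connect0.
  apply: connect_trans (IH (ltnW ht)) (connect1 _).
  by apply/path_eadjP; exists t; first by []; left.
move=> x y /path_vsetP[s hs ->] /path_vsetP[t ht ->].
apply: connect_trans (from0 t ht).
by rewrite (sym_connect_sym eadj_path_sym); apply: from0.
Qed.

Hypothesis f_inj : forall s t, s < L -> t < L -> f s = f t -> s = t.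

Lemma path_acyclic : sub_acyclic path_eset.
Proof.
move=> [|x p] // p_uniq p_size; apply/negP => p_cycle.
have onp : exists t, (t < L) && (f t \in x :: p).
  move: p_cycle; rewrite /= rcons_path => /andP[_ /path_eadjP[t ht [[_ fx]|[_ fx]]]].
    by exists t.+1; rewrite ht -fx mem_head.
  by exists t; rewrite (ltnW ht) -fx mem_head.
case: (ex_minnP onp) => t /andP[tL tp] t_min.
have [i q rot_p] := rot_to tp.
have q_uniq : uniq (f t :: q) by rewrite -rot_p rot_uniq.
have q_cycle : cycle (eadj path_eset) (f t :: q) by rewrite -rot_p rot_cycle.
have q_sub y : y \in q -> y \in x :: p.
  by move=> yq; rewrite -(mem_rot i) rot_p inE yq orbT.
have nbr y : y \in q -> eadj path_eset (f t) y -> y = f t.+1.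
  move=> yq /path_eadjP[s hs [[/f_inj ts ->]|[/f_inj ts ys]]].
    by rewrite ts //; lia.
  have := t_min s; rewrite -ys q_sub // (ltnW hs) ts //; lia.
have q_size : 2 <= size q by move: p_size; rewrite -(size_rot i) rot_p.
case: q rot_p q_uniq q_cycle q_sub nbr q_size => [|y [|z r]] // _ q_uniq.
rewrite /= rcons_path => /and4P[ty _ _ zt] _ nbr _.
rewrite eadj_path_sym in zt.
have yl : y = last z r.
  by rewrite (nbr y) ?mem_head // (nbr _ _ zt) // inE mem_last orbT.
by move: q_uniq; rewrite !cons_uniq yl mem_last andbF.
Qed.

Lemma path_is_tree (adj : rel T) : 0 < L ->
  (forall t, t.+1 < L -> adj (f t) (f t.+1)) -> is_tree adj path_vset path_eset.
Proof.
move=> L_gt0 f_adj; split; last split; last split.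
- split.
    apply/subsetP => e /path_esetP[t ht ->]; rewrite inE.
    by apply/existsP; exists (f t); apply/existsP; exists (f t.+1); rewrite f_adj ?eqxx.
  exact: path_eset_sub.
- by apply/set0Pn; exists (f 0); apply/path_vsetP; exists 0.
- exact: path_connected.
- exact: path_acyclic.
Qed.

Lemma path_proper c (col : {set T} -> 'I_c) :
  (forall t, t.+2 < L -> col [set f t; f t.+1] != col [set f t.+1; f t.+2]) ->
  Defs.proper_sub col path_eset.
Proof.
move=> col_ne e1 e2 /path_esetP[s hs ->] /path_esetP[t ht ->] e12 /set0Pn[v].
rewrite inE => /andP[/set2P vs /set2P vt].
have adjacent : s.+1 = t \/ t.+1 = s.
  case: vs vt => -> [] /f_inj fst.
  - by move: e12; rewrite fst ?eqxx //; lia.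
  - by right; symmetry; apply: fst; lia.
  - by left; apply: fst; lia.
  - by move: e12; rewrite (eq_add_S _ _ (fst _ _)) ?eqxx //; lia.
case: adjacent hs ht => <- hs ht; first exact: col_ne.
by rewrite eq_sym; apply: col_ne.
Qed.

End PathTrees.

Section PathFamilies.
Variables (T : finType) (S : {set T}) (l L : nat) (f : 'I_l -> nat -> T).

Hypothesis paths_meet_in_S : forall i j s t, s < L -> t < L -> f i s = f j t ->
  s = t /\ (i = j \/ f i s \in S).
Hypothesis S_sub_paths : forall i, S \subset path_vset (f i) L.
Hypothesis path_edges_leave_S : forall i t, t.+1 < L ->
  (f i t \notin S) || (f i t.+1 \notin S).

Lemma path_vsetI i j : i != j -> path_vset (f i) L :&: path_vset (f j) L = S.
Proof.
move=> ij; apply/setP => v; rewrite inE; apply/idP/idP.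
  case/andP => /path_vsetP[s hs ->] /path_vsetP[t ht /paths_meet_in_S[] // _ [eij|//]].
  by rewrite eij eqxx in ij.
by move=> vS; rewrite (subsetP (S_sub_paths i)) ?(subsetP (S_sub_paths j)).
Qed.

Lemma path_esetI i j : i != j -> path_eset (f i) L :&: path_eset (f j) L = set0.
Proof.
move=> ij; apply/setP => e; rewrite !inE; apply/negP => /andP[e_i e_j].
have eS : e \subset S by rewrite -(path_vsetI ij) subsetI !path_eset_sub.
case/path_esetP: e_i eS => t ht -> eS.
by move: (path_edges_leave_S i ht); rewrite !(subsetP eS) ?set21 ?set22.
Qed.

Lemma paths_int_disjoint (adj : rel T) : 0 < L ->
  (forall i t, t.+1 < L -> adj (f i t) (f i t.+1)) ->
  int_disjoint adj S (fun i => (path_vset (f i) L, path_eset (f i) L)).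
Proof.
move=> L_gt0 f_adj; split=> [i | i j ij]; last by rewrite path_esetI ?path_vsetI.
split=> /=; last exact: S_sub_paths.
apply: path_is_tree => //; last exact: f_adj.
by move=> s t hs ht /paths_meet_in_S[].
Qed.

End PathFamilies.

Section OneColour.
Variables (T : finType) (col : {set T} -> 'I_1) (E : {set {set T}}).
Hypothesis E_proper : Defs.proper_sub col E.

Lemma proper1_disjoint e1 e2 : e1 \in E -> e2 \in E -> e1 != e2 -> e1 :&: e2 = set0.
Proof.
move=> e1E e2E e12; apply/eqP; apply: contraT => /(E_proper e1E e2E e12).
by rewrite (ord1 (col e1)) (ord1 (col e2)).
Qed.

Lemma proper1_walk x p : path (eadj E) x p -> last x p = x \/ [set x; last x p] \in E.
Proof.
elim: p x => [|y p IH] x /=; first by left.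
case/andP => xy /IH [->|y_last]; first by right.
have [xy_eq|xy_ne] := eqVneq [set x; y] [set y; last y p].
  have : last y p \in [set x; y] by rewrite xy_eq set22.
  by case/set2P => ->; [left | right].
have := proper1_disjoint xy y_last xy_ne; move/setP/(_ y).
by rewrite !inE !eqxx orbT.
Qed.

Lemma proper1_connect x y : connect (eadj E) x y -> x != y -> [set x; y] \in E.
Proof.
case/connectP => p xp ->; have [->|//] := proper1_walk xp.
by rewrite eqxx.
Qed.

End OneColour.

Lemma proper1_S_tree_card (T : finType) (adj : rel T) (col : {set T} -> 'I_1)
    (S V : {set T}) (E : {set {set T}}) :
  S_tree adj S V E -> Defs.proper_sub col E -> #|S| <= 2.
Proof.
move=> [[_ [_ [E_conn _]]] SV] E_proper; rewrite leqNgt; apply/negP.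
case/card_gt2P => x [y [z [[xS yS zS] [xy yz zx]]]].
have edge a b : a \in S -> b \in S -> a != b -> [set a; b] \in E.
  by move=> aS bS ab; apply: (proper1_connect E_proper) => //; apply: E_conn; apply: (subsetP SV).
have xy_xz : [set x; y] != [set x; z].
  apply: contraNneq yz => /setP/(_ y); rewrite !inE eqxx orbT eq_sym.
  by rewrite (negbTE xy) => /esym.
have xz : x != z by rewrite eq_sym.
have := proper1_disjoint E_proper (edge _ _ xS yS xy) (edge _ _ xS zS xz) xy_xz.
by move/setP/(_ x); rewrite !inE !eqxx.
Qed.

Lemma px_good_kappa_ge (T : finType) (adj : rel T) k l c :
  px_good adj k l c -> kappa_ge adj k l.
Proof. by move=> [col good] S /good[F []]; exists F. Qed.

Lemma px_good_gt1 (T : finType) (adj : rel T) k l c :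
  2 < k -> k <= #|T| -> 0 < l -> px_good adj k l c -> 1 < c.
Proof.
move=> k_gt2 kT l_gt0 [col good].
case: c col good => [|[|c]] // col good; first by case: (col set0).
have [s [s_uniq s_size _]] := card_geqP kT.
have S_card : #|[set x in s]| = k by rewrite cardsE (card_uniqP s_uniq).
have [F [[F_tree _] F_proper]] := good _ S_card.
have := proper1_S_tree_card (F_tree (Ordinal l_gt0)) (F_proper (Ordinal l_gt0)).
by rewrite S_card leqNgt k_gt2.
Qed.

Lemma card_ord_pred n (P : pred nat) : #|[set i : 'I_n | P i]| = count P (iota 0 n).
Proof.
by rewrite cardsE cardE /enum_mem size_filter -enumT -val_enum_ord count_map.
Qed.

Lemma count_parity_iota n (b : bool) :
  count (fun i => odd i == b) (iota 0 n) = (n + ~~ b)./2.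
Proof.
elim: n => [|n IH]; first by case: b.
by rewrite -addn1 iotaD count_cat IH /=; case: b {IH} => /=; lia.
Qed.

Section CompleteBipartite.
Variable n : nat.
Local Notation V := ('I_n + 'I_n)%type.

Definition side (x : V) : bool := if x is inr _ then true else false.
Definition idx (x : V) : nat := match x with inl i | inr i => i end.

Lemma Knn_adjE x y : Knn_adj n x y = (side x != side y).
Proof. by case: x; case: y. Qed.

Lemma Knn_adj_neq x y : Knn_adj n x y -> x != y.
Proof. by apply: contraTneq => ->; rewrite Knn_adjE eqxx. Qed.

Lemma Knn_connected : connected_graph (Knn_adj n).
Proof.
have lr i j : connect (Knn_adj n) (inl i) (inr j) by exact: connect1.
have rl i j : connect (Knn_adj n) (inr i) (inl j) by exact: connect1.
case=> i [] j //.
- exact: connect_trans (lr i i) (rl i j).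
- exact: connect_trans (rl i i) (lr i j).
Qed.

Definition parity_colouring (e : {set V}) : 'I_2 := inord (odd (\sum_(x in e) idx x)).

Lemma parity_colouring2 x y : x != y ->
  parity_colouring [set x; y] = inord (odd (idx x + idx y)).
Proof. by move=> xy; rewrite /parity_colouring big_setU1 ?big_set1 // inE. Qed.

Lemma parity_colouring_ne x y z : x != y -> y != z -> odd (idx x) != odd (idx z) ->
  parity_colouring [set x; y] != parity_colouring [set y; z].
Proof.
move=> xy yz xz; rewrite !parity_colouring2 //; apply/eqP => /(congr1 val).
rewrite /= !inordK ?ltnS ?leq_b1 // !oddD.
by move: xz; case: (odd (idx x)); case: (odd (idx y)); case: (odd (idx z)).
Qed.

Definition kind_class (sd pr : bool) : {set V} :=
  [set x | (side x == sd) && (odd (idx x) == pr)].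

Lemma card_kind_class sd pr : n./2 <= #|kind_class sd pr|.
Proof.
pose A := [set i : 'I_n | odd i == pr].
have card_A : n./2 <= #|A|.
  by rewrite (card_ord_pred n (fun i => odd i == pr)) count_parity_iota half_leq ?leq_addr.
pose inj := if sd then @inr 'I_n 'I_n else @inl 'I_n 'I_n.
have sub : inj @: A \subset kind_class sd pr.
  by apply/subsetP => _ /imsetP[i i_pr ->]; rewrite !inE in i_pr *; case: (sd) @inj.
have inj_inj : injective inj by rewrite /inj; case: (sd); [exact: inr_inj | exact: inl_inj].
by apply: leq_trans (subset_leq_card sub); rewrite card_imset.
Qed.

End CompleteBipartite.

Section TreeFamily.
Variables (n k l : nat) (S : {set 'I_n + 'I_n}) (v0 : 'I_n + 'I_n).
Hypotheses (S_card : #|S| = k) (k_gt0 : 0 < k) (n_large : 8 * k * l + k < n./2).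
Local Notation V := ('I_n + 'I_n)%type.

Definition slot (x : V) : nat := side x + (odd (idx x)).*2.
Definition rank_in_S (x : V) : nat := index x (enum S).
Definition pos (x : V) : nat := 8 * rank_in_S x + slot x.

Lemma slot_lt4 x : slot x < 4.
Proof. by rewrite /slot; case: (side x); case: (odd _). Qed.

Lemma rank_in_S_inj : {in S &, injective rank_in_S}.
Proof. by move=> s t sS tS; apply: index_inj; rewrite ?mem_enum. Qed.

Lemma pos_lt s : s \in S -> pos s < 8 * k.
Proof.
move=> sS; have rank_lt : rank_in_S s < k.
  by rewrite -S_card cardE index_mem mem_enum.
by have := slot_lt4 s; rewrite /pos; lia.
Qed.

Lemma pos_kind s : odd (pos s) = side s /\ odd (pos s)./2 = odd (idx s).
Proof. by rewrite /pos /slot; case: (side s); case: (odd (idx s)); split; lia. Qed.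

Lemma pos_inj : {in S &, injective pos}.
Proof.
move=> s t sS tS; have := slot_lt4 s; have := slot_lt4 t; rewrite /pos => ht hs st.
by apply: rank_in_S_inj => //; lia.
Qed.

Lemma pos_succ s t : s \in S -> t \in S -> pos t != (pos s).+1.
Proof.
move=> sS tS; apply/eqP => st.
have := slot_lt4 s; have := slot_lt4 t; rewrite /pos in st * => ht hs.
have ts : t = s by apply: rank_in_S_inj => //; lia.
by move: st; rewrite ts; lia.
Qed.

Definition pool (sd pr : bool) : {set V} := kind_class n sd pr :\: S.
Definition fresh (sd pr : bool) (q : nat) : V := nth v0 (enum (pool sd pr)) q.

Lemma pool_large sd pr : 8 * k * l < #|pool sd pr|.
Proof.
have := card_kind_class n sd pr.
have := subset_leq_card (subsetIr (kind_class n sd pr) S).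
by rewrite cardsD S_card; lia.
Qed.

Lemma fresh_kind sd pr q : q < 8 * k * l ->
  [/\ fresh sd pr q \notin S, side (fresh sd pr q) = sd & odd (idx (fresh sd pr q)) = pr].
Proof.
move=> hq; have : fresh sd pr q \in pool sd pr.
  by rewrite -mem_enum mem_nth // -cardE (ltn_trans hq (pool_large sd pr)).
by rewrite !inE => /and3P[-> /eqP -> /eqP ->].
Qed.

Lemma fresh_inj sd pr sd' pr' q q' : q < 8 * k * l -> q' < 8 * k * l ->
  fresh sd pr q = fresh sd' pr' q' -> q = q'.
Proof.
move=> hq hq' E.
have [_ sd_q pr_q] := fresh_kind sd pr hq; have [_ sd_q' pr_q'] := fresh_kind sd' pr' hq'.
have sd_eq : sd = sd' by rewrite -sd_q -sd_q' E.
have pr_eq : pr = pr' by rewrite -pr_q -pr_q' E.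
subst sd' pr'; have size_pool := pool_large sd pr; rewrite cardE in size_pool.
apply/eqP; rewrite -(@nth_uniq _ v0 (enum (pool sd pr))) ?enum_uniq //; first exact/eqP.
- exact: ltn_trans hq size_pool.
- exact: ltn_trans hq' size_pool.
Qed.

Definition tree_vertex (i : 'I_l) (t : nat) : V :=
  if [pick s in S | pos s == t] is Some s then s
  else fresh (odd t) (odd t./2) (i * (8 * k) + t).

Variant tree_vertex_spec (i : 'I_l) (t : nat) : V -> Prop :=
  | TreeVertexInS s of s \in S & pos s = t : tree_vertex_spec i t s
  | TreeVertexFresh of (forall s, s \in S -> pos s != t) :
      tree_vertex_spec i t (fresh (odd t) (odd t./2) (i * (8 * k) + t)).

Lemma tree_vertexP i t : tree_vertex_spec i t (tree_vertex i t).
Proof.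
rewrite /tree_vertex; case: pickP => [s /andP[sS /eqP st] | none].
  exact: TreeVertexInS.
by apply: TreeVertexFresh => s sS; have := none s; rewrite sS => /negbT.
Qed.

Lemma fresh_index_lt (i : 'I_l) t : t < 8 * k -> i * (8 * k) + t < 8 * k * l.
Proof. by have := ltn_ord i; nia. Qed.

Lemma tree_vertex_kind i t : t < 8 * k ->
  side (tree_vertex i t) = odd t /\ odd (idx (tree_vertex i t)) = odd t./2.
Proof.
move=> ht; case: tree_vertexP => [s _ <- | _]; first by have [-> ->] := pos_kind s.
by have [_ -> ->] := fresh_kind (odd t) (odd t./2) (fresh_index_lt i ht).
Qed.

Lemma tree_vertex_inS i t : t < 8 * k -> tree_vertex i t \in S ->
  exists2 s, s \in S & pos s = t.
Proof.
move=> ht; case: tree_vertexP => [s sS st | _]; first by exists s.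
by have [/negbTE -> _ _] := fresh_kind (odd t) (odd t./2) (fresh_index_lt i ht).
Qed.

Lemma tree_vertices_meet i j s t : s < 8 * k -> t < 8 * k ->
  tree_vertex i s = tree_vertex j t -> s = t /\ (i = j \/ tree_vertex i s \in S).
Proof.
move=> hs ht; case: (tree_vertexP i s) => [a aS <- | _];
  case: (tree_vertexP j t) => [b bS <- | _].
- by move=> ->; split=> //; right.
- have [bS _ _] := fresh_kind (odd t) (odd t./2) (fresh_index_lt j ht).
  by move=> ab; rewrite -ab aS in bS.
- have [aS _ _] := fresh_kind (odd s) (odd s./2) (fresh_index_lt i hs).
  by move=> ab; rewrite ab bS in aS.
move/fresh_inj => /(_ (fresh_index_lt i hs) (fresh_index_lt j ht)) /(congr1 (edivn^~ (8 * k))).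
by rewrite !edivn_eq // => -[/val_inj <- <-]; split=> //; left.
Qed.

Lemma S_sub_tree i : S \subset path_vset (tree_vertex i) (8 * k).
Proof.
apply/subsetP => s sS; apply/path_vsetP; exists (pos s); first exact: pos_lt.
case: (tree_vertexP i (pos s)) => [t tS /(pos_inj tS sS) -> // | /(_ s sS)].
by rewrite eqxx.
Qed.

Lemma tree_edge_leaves_S i t : t.+1 < 8 * k ->
  (tree_vertex i t \notin S) || (tree_vertex i t.+1 \notin S).
Proof.
move=> ht; rewrite -negb_and; apply/andP.
case=> /(tree_vertex_inS (ltnW ht))[a aS a_t] /(tree_vertex_inS ht)[b bS b_t].
by move: (pos_succ aS bS); rewrite a_t b_t eqxx.
Qed.

Lemma tree_vertex_adj i t : t.+1 < 8 * k ->
  Knn_adj n (tree_vertex i t) (tree_vertex i t.+1).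
Proof.
move=> ht; have [side_t _] := tree_vertex_kind i (ltnW ht).
have [side_t1 _] := tree_vertex_kind i ht.
by rewrite Knn_adjE side_t side_t1 /=; case: (odd t).
Qed.

Lemma tree_proper i :
  Defs.proper_sub (@parity_colouring n) (path_eset (tree_vertex i) (8 * k)).
Proof.
apply: path_proper => [s t hs ht /(tree_vertices_meet hs ht)[] // | t ht].
apply: parity_colouring_ne.
- by apply: Knn_adj_neq; apply: tree_vertex_adj; lia.
- exact/Knn_adj_neq/tree_vertex_adj.
have [_ ->] := tree_vertex_kind i (ltnW (ltnW ht)).
have [_ ->] := tree_vertex_kind i ht.
by rewrite [t.+2./2]/= oddS; case: (odd _).
Qed.

Lemma tree_family_good : exists F : 'I_l -> {set V} * {set {set V}},
  int_disjoint (Knn_adj n) S F /\ forall i, Defs.proper_sub (@parity_colouring n) (F i).2.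
Proof.
exists (fun i => (path_vset (tree_vertex i) (8 * k), path_eset (tree_vertex i) (8 * k))).
split; last exact: tree_proper.
apply: paths_int_disjoint.
- exact: tree_vertices_meet.
- exact: S_sub_tree.
- exact: tree_edge_leaves_S.
- by rewrite muln_gt0.
- exact: tree_vertex_adj.
Qed.

End TreeFamily.

Lemma Knn_px_good n k l : 0 < k -> 8 * k * l + k < n./2 -> px_good (Knn_adj n) k l 2.
Proof.
move=> k_gt0 n_large; have n_gt0 : 0 < n by lia.
exists (@parity_colouring n) => S S_card.
exact: (tree_family_good (inl (Ordinal n_gt0)) S_card).
Qed.

Theorem theorem3p1 (k l : nat) :
  3 <= k -> 0 < l ->
  exists N2 : nat, 0 < N2 /\
    forall n : nat, N2 <= n -> px_is (Knn_adj n) k l 2.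
Proof.
move=> k_ge3 l_gt0; exists (2 * (8 * k * l + k) + 2); split=> [|n n_large]; first by rewrite addn2.
have good2 : px_good (Knn_adj n) k l 2 by apply: Knn_px_good; lia.
have card_V : #|{: 'I_n + 'I_n}| = n + n by rewrite card_sum card_ord.
have k_le_V : k <= #|{: 'I_n + 'I_n}| by rewrite card_V; lia.
split=> //.
- exact: Knn_connected.
- by rewrite k_le_V andbT; lia.
- exact: px_good_kappa_ge good2.
- by split=> // c; apply: px_good_gt1.
Qed.
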